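(* Let $f=\sum_{J\in\mathbb{N}^n} a_J x^J$ be a nonzero real polynomial, let $\mathcal{M}$ be the set of $P\in\mathbb{N}^n$ with $a_P\neq 0$, and fix an integer $k\ge 0$. Let $M$ be the matrix whose rows are indexed by the vectors $I\in\{0,1\}^n$ with $|I|=k$, whose columns are indexed by the finitely many $J\in\mathbb{N}^n$ such that $I+J\in\mathcal{M}$ for some such $I$, and whose entries are $M_{I,J}=a_{I+J}$. Let $B=M^T M$. Then $$\mathrm{Tr}(B^2)\leq |\mathcal{M}|\,\mathrm{Tr}(B)\left(\sum_{R \in \mathcal{M}} a_R^2\right).$$
   Context: For $\alpha\in\mathbb{N}^n$, $x^\alpha = x_1^{\alpha_1}\cdots x_n^{\alpha_n}/(\alpha_1!\cdots\alpha_n!)$ (scaled monomial basis). For $I\in\{0,1\}^n$, $|I|=\sum_i I_i$. *)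

From mathcomp Require Import all_boot all_order all_algebra.
From mathcomp Require Import finmap mpoly.
Set Implicit Arguments. Unset Strict Implicit. Unset Printing Implicit Defensive.
Import Order.TTheory GRing.Theory Num.Theory.
Local Open Scope ring_scope.

Section Defs.
Variables (R : realFieldType) (n : nat).

(* Coefficient a_J of f in the scaled monomial basis x^J = x^J / J! :
   f = \sum_J a_J x^J/J!, so a_J = (standard coefficient of x^J) * J!. *)
Definition scoef (f : {mpoly R[n]}) (J : 'X_{1..n}) : R :=
  f@_J * (\prod_(i < n) (J i)`!)%:R.

Definition rowidx (k : nat) : seq 'X_{1..n} :=
  [seq [multinom (nat_of_bool (b i)) | i < n]
     | b : {ffun 'I_n -> bool} <- enum [pred b : {ffun 'I_n -> bool} | (\sum_(i < n) nat_of_bool (b i) == k)%N]].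

Definition colidx (f : {mpoly R[n]}) (k : nat) : seq 'X_{1..n} :=
  undup [seq [multinom (P i - Q i)%N | i < n]
          | P : 'X_{1..n} <- msupp f,
            Q : 'X_{1..n} <- [seq Q : 'X_{1..n} <- rowidx k | [forall i : 'I_n, (Q i <= P i)%N]]].

Definition Mmat (f : {mpoly R[n]}) (k : nat)
  : 'M[R]_(size (rowidx k), size (colidx f k)) :=
  \matrix_(i, j) scoef f ((nth 0%MM (rowidx k) i) + (nth 0%MM (colidx f k) j))%MM.

Definition Bmat (f : {mpoly R[n]}) (k : nat) := (Mmat f k)^T *m Mmat f k.

End Defs.

From mathcomp Require Import all_boot all_order all_algebra.
From mathcomp Require Import finmap mpoly.
From mathcomp Require Import ring.
Set Implicit Arguments. Unset Strict Implicit. Unset Printing Implicit Defensive.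
Import Order.TTheory GRing.Theory Num.Theory.
Local Open Scope ring_scope.

(* Expanding tr((A^T A)^2) = \sum A_ij A_ij' A_i'j' A_i'j and bounding each term
   by AM-GM gives a Schur-test bound: if every row and every column of A has
   absolute sum at most s, then tr((A^T A)^2) <= s^2 tr(A^T A).  Each row or
   column of M lists distinct coefficients a_P, so s = \sum_(P in supp f) |a_P|
   works, and Cauchy-Schwarz gives s^2 <= |supp f| \sum_P a_P^2. *)

Section SumBounds.
Variable R : realFieldType.

Lemma ler_sum_sub_uniq (T : eqType) (t u : seq T) (g : T -> R) :
  uniq t -> uniq u -> {subset t <= u} -> {in u, forall x, 0 <= g x} ->
  \sum_(x <- t) g x <= \sum_(x <- u) g x.
Proof.
move=> t_uniq u_uniq tu g_ge0.
have t_filter : perm_eq [seq x <- u | x \in t] t.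
  apply: uniq_perm; rewrite ?filter_uniq // => x.
  by rewrite mem_filter andb_idr //; apply: tu.
rewrite -(perm_big _ t_filter) big_filter big_mkcond /= big_seq [X in _ <= X]big_seq.
by apply: ler_sum => x xu; case: ifP => // _; apply: g_ge0.
Qed.

Lemma sumr_const_seq (T : Type) (u : seq T) (c : R) : \sum_(x <- u) c = c *+ size u.
Proof. by rewrite big_const_seq count_predT iter_addr_0. Qed.

Lemma sqr_sum_norm_le (T : Type) (u : seq T) (a : T -> R) :
  (\sum_(x <- u) `|a x|) ^+ 2 <= (size u)%:R * \sum_(x <- u) a x ^+ 2.
Proof.
rewrite -(ler_pMn2r (n := 2)) //.
have mean_sqr x y : `|a x| * `|a y| *+ 2 <= a x ^+ 2 + a y ^+ 2.
  by rewrite -(real_normK (num_real (a x))) -(real_normK (num_real (a y)))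
             leif_mean_square_scaled.
have double_sum : ((size u)%:R * \sum_(x <- u) a x ^+ 2) *+ 2 =
    \sum_(x <- u) \sum_(y <- u) (a x ^+ 2 + a y ^+ 2).
  under [RHS]eq_bigr do rewrite big_split /= sumr_const_seq.
  by rewrite big_split /= sumr_const_seq sumrMnl mulr2n mulr_natl.
rewrite double_sum expr2 mulr_suml -sumrMnl; apply: ler_sum => x _.
by rewrite mulr_sumr -sumrMnl; apply: ler_sum => y _.
Qed.
End SumBounds.

Section Schur.
Variables (R : realFieldType) (m p : nat) (A : 'M[R]_(m, p)).

Lemma mxtrace_gram : \tr (A^T *m A) = \sum_i \sum_j A i j ^+ 2.
Proof.
rewrite /mxtrace exchange_big; apply: eq_bigr => i _.
by rewrite mxE; apply: eq_bigr => j _; rewrite !mxE expr2.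
Qed.

Lemma mxtrace_gram_ge0 : 0 <= \tr (A^T *m A).
Proof. by rewrite mxtrace_gram; do 2!apply: sumr_ge0 => * ; exact: sqr_ge0. Qed.

Lemma mxtrace_gram_sqr : \tr ((A^T *m A) *m (A^T *m A)) =
  \sum_j \sum_j' \sum_i \sum_i' A i j * A i j' * (A i' j' * A i' j).
Proof.
rewrite /mxtrace; apply: eq_bigr => j _; rewrite mxE; apply: eq_bigr => j' _.
rewrite !mxE mulr_suml; apply: eq_bigr => i _; rewrite mulr_sumr.
by apply: eq_bigr => i' _; rewrite !mxE.
Qed.

Lemma mulr4_le_norm_mean (x y z w : R) :
  x * y * (z * w) <= `|x| * `|z| * ((y ^+ 2 + w ^+ 2) / 2).
Proof.
rewrite mulrACA (le_trans (ler_norm _)) // !normrM ler_wpM2l ?mulr_ge0 //.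
by rewrite -(real_normK (num_real y)) -(real_normK (num_real w)) leif_mean_square.
Qed.

Let rsum i : R := \sum_j `|A i j|.
Let csum j : R := \sum_i `|A i j|.

Lemma mxtrace_gram_sqr_le_weighted :
  \tr ((A^T *m A) *m (A^T *m A)) <= \sum_i \sum_j A i j ^+ 2 * (rsum i * csum j).
Proof.
pose F i j i' j' := `|A i j| * `|A i' j'| * A i j' ^+ 2.
have term_le i j i' j' :
    A i j * A i j' * (A i' j' * A i' j) <= F i j i' j' / 2 + F i' j' i j / 2.
  have -> : F i j i' j' / 2 + F i' j' i j / 2 =
      `|A i j| * `|A i' j'| * ((A i j' ^+ 2 + A i' j ^+ 2) / 2) by rewrite /F; ring.
  exact: mulr4_le_norm_mean.
pose T := \sum_j \sum_j' \sum_i \sum_i' F i j i' j'.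
have T_swap : \sum_j \sum_j' \sum_i \sum_i' F i' j' i j = T.
  rewrite exchange_big; apply: eq_bigr => j _; apply: eq_bigr => j' _.
  by rewrite exchange_big.
have T_weighted : T = \sum_i \sum_j A i j ^+ 2 * (rsum i * csum j).
  rewrite /T exchange_big /=; under eq_bigr do rewrite exchange_big /=.
  rewrite exchange_big; apply: eq_bigr => i _; apply: eq_bigr => j' _.
  rewrite /rsum /csum mulr_suml mulr_sumr; apply: eq_bigr => j _.
  rewrite !mulr_sumr; apply: eq_bigr => i' _.
  by rewrite /F; ring.
rewrite mxtrace_gram_sqr -T_weighted (splitr T) -{2}T_swap /T.
do 4!(rewrite !mulr_suml -big_split; apply: ler_sum => ? _).
exact: term_le.
Qed.

Lemma mxtrace_gram_sqr_le (s : R) :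
  (forall i, rsum i <= s) -> (forall j, csum j <= s) ->
  \tr ((A^T *m A) *m (A^T *m A)) <= s ^+ 2 * \tr (A^T *m A).
Proof.
move=> rsum_le csum_le; apply: (le_trans mxtrace_gram_sqr_le_weighted).
rewrite mxtrace_gram mulr_sumr ler_sum // => i _; rewrite mulr_sumr ler_sum // => j _.
rewrite mulrC ler_wpM2r ?sqr_ge0 // expr2 ler_pM ?sumr_ge0 //.
Qed.
End Schur.

Section ScaledCoefficients.
Variables (R : realFieldType) (n : nat) (f : {mpoly R[n]}).

Lemma scoef_eq0 P : P \notin msupp f -> scoef f P = 0.
Proof. by move=> /memN_msupp_eq0 fP0; rewrite /scoef fP0 mul0r. Qed.

Lemma sum_norm_scoef_shift_le (s : seq 'X_{1..n}) I : uniq s ->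
  \sum_(J <- s) `|scoef f (I + J)%MM| <= \sum_(P <- msupp f) `|scoef f P|.
Proof.
move=> s_uniq; rewrite -(big_map (fun J => (I + J)%MM) xpredT (fun P => `|scoef f P|)).
rewrite (bigID (mem (msupp f))) /= [X in _ + X]big1 ?addr0; last first.
  by move=> P /scoef_eq0 ->; rewrite normr0.
rewrite -big_filter; apply: ler_sum_sub_uniq (msupp_uniq f) _ _ => //.
- by rewrite filter_uniq // map_inj_uniq //; exact: addmI.
- by move=> P; rewrite mem_filter => /andP[].
Qed.

Lemma rowidx_uniq k : uniq (rowidx n k).
Proof.
rewrite map_inj_in_uniq ?enum_uniq // => b1 b2 _ _ /mnmP b12.
by apply/ffunP => i; have := b12 i; rewrite !mnmE; case: (b1 i); case: (b2 i).
Qed.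

Lemma Mmat_row_norm_le k i :
  \sum_j `|Mmat f k i j| <= \sum_(P <- msupp f) `|scoef f P|.
Proof.
have -> : \sum_j `|Mmat f k i j| =
    \sum_(J <- colidx f k) `|scoef f (nth 0%MM (rowidx n k) i + J)%MM|.
  by rewrite (big_nth 0%MM) big_mkord; apply: eq_bigr => j _; rewrite mxE.
exact/sum_norm_scoef_shift_le/undup_uniq.
Qed.

Lemma Mmat_col_norm_le k j :
  \sum_i `|Mmat f k i j| <= \sum_(P <- msupp f) `|scoef f P|.
Proof.
have -> : \sum_i `|Mmat f k i j| =
    \sum_(I <- rowidx n k) `|scoef f (nth 0%MM (colidx f k) j + I)%MM|.
  by rewrite (big_nth 0%MM) big_mkord; apply: eq_bigr => i _; rewrite mxE addmC.
exact/sum_norm_scoef_shift_le/rowidx_uniq.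
Qed.

End ScaledCoefficients.

Theorem lemma5 (R : realFieldType) (n : nat) (f : {mpoly R[n]}) (k : nat) :
  f != 0 ->
  \tr (Bmat f k *m Bmat f k)
    <= (size (msupp f))%:R * \tr (Bmat f k)
       * (\sum_(P <- msupp f) scoef f P ^+ 2).
Proof.
move=> _; rewrite /Bmat.
apply: (le_trans (mxtrace_gram_sqr_le (@Mmat_row_norm_le _ _ f k)
                                       (@Mmat_col_norm_le _ _ f k))).
rewrite [leRHS]mulrAC.
by apply: ler_pM; rewrite ?sqr_ge0 ?mxtrace_gram_ge0 ?sqr_sum_norm_le.
Qed.
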